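(* Let $k\ge 2$. If $G\in\mathcal{G}_k$ then $\kappa(G)\le\kappa(K_k)$. Moreover this bound is tight, since $K_k\in\mathcal{G}_k$.
   Context: For a graph $G=([n],E)$ and $w\in\mathbb{R}^E$, let $\mathrm{ip}(G,w)=\max_{x\in\{\pm1\}^n}\sum_{ij\in E}w_{ij}x_ix_j$ and $\mathrm{sdp}(G,w)=\max\sum_{ij\in E}w_{ij}u_i^Tu_j$, the maximum over unit vectors $u_1,\dots,u_n\in\mathbb{R}^n$; $\kappa(G)=\sup_{w\in\mathbb{R}^E}\mathrm{sdp}(G,w)/\mathrm{ip}(G,w)$. Let $E_n$ be the edge set of $K_n$ and $\mathrm{CUT}_n=\mathrm{conv}\{(x_ix_j)_{ij\in E_n}: x\in\{\pm1\}^n\}$. The support graph of a linear inequality $w^Tx\le\alpha$ on $\mathbb{R}^{E_n}$ is $H=(W,F)$ with $F=\{ij: w_{ij}\ne0\}$ and $W$ the set of nodes covered by $F$; it is supported by at most $k$ points if $|W|\le k$. $\mathcal{R}_k(K_n)$ is the polyhedron defined by all inequalities valid for $\mathrm{CUT}_n$ supported by at most $k$ points. For $G=([n],E)$, $\mathrm{CUT}(G)=\pi_E(\mathrm{CUT}_n)$, $\mathcal{R}_k(G)=\pi_E(\mathcal{R}_k(K_n))$ ($\pi_E$ the coordinate projection to $\mathbb{R}^E$), and $\mathcal{G}_k$ is the class of graphs $G$ with $\mathrm{CUT}(G)=\mathcal{R}_k(G)$. *)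

From HB Require Import structures.
From mathcomp Require Import all_boot all_order all_algebra.
From mathcomp Require Import classical_sets boolp reals constructive_ereal ereal.
Set Implicit Arguments. Unset Strict Implicit. Unset Printing Implicit Defensive.
Import Order.TTheory GRing.Theory Num.Theory.
Local Open Scope ring_scope.
Local Open Scope classical_set_scope.

Section Defs.
Variable R : realType.

(* Edge set E_n of K_n on vertex set [n] = 'I_n: pairs (i,j) with i < j. *)
Definition Kedges (n : nat) : {set 'I_n * 'I_n} := [set p : 'I_n * 'I_n | (p.1 < p.2)%N].

Definition sgn (b : bool) : R := if b then 1 else -1.

Definition cutvec (n : nat) (x : 'I_n -> bool) (p : 'I_n * 'I_n) : R :=
  sgn (x p.1) * sgn (x p.2).

Definition ip (n : nat) (E : {set 'I_n * 'I_n}) (w : 'I_n * 'I_n -> R) : R :=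
  sup [set r | exists x : 'I_n -> bool, r = \sum_(p in E) w p * cutvec x p].

Definition sdp (n : nat) (E : {set 'I_n * 'I_n}) (w : 'I_n * 'I_n -> R) : R :=
  sup [set r | exists u : 'I_n -> 'I_n -> R,
         (forall i, \sum_(l < n) u i l ^+ 2 = 1) /\
         r = \sum_(p in E) w p * (\sum_(l < n) u p.1 l * u p.2 l)].

(* kappa(G) = sup_w sdp(G,w)/ip(G,w), over the w for which the ratio is
   defined (ip(G,w) > 0), as an extended real. *)
Definition kappa (n : nat) (E : {set 'I_n * 'I_n}) : \bar R :=
  ereal_sup [set ((sdp E w / ip E w)%:E) | w in [set w | 0 < ip E w]].

(* Points of R^{E_n} are functions 'I_n * 'I_n -> R (only coordinates in
   Kedges n matter).  CUT_n = convex hull of the cut vectors. *)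
Definition inCUT (n : nat) (y : 'I_n * 'I_n -> R) : Prop :=
  exists lam : {ffun 'I_n -> bool} -> R,
    (forall x, 0 <= lam x) /\ \sum_x lam x = 1 /\
    forall p, p \in Kedges n -> y p = \sum_x lam x * cutvec x p.

Definition valid (n : nat) (a : 'I_n * 'I_n -> R) (alpha : R) : Prop :=
  forall y, inCUT y -> \sum_(p in Kedges n) a p * y p <= alpha.

Definition support (n : nat) (a : 'I_n * 'I_n -> R) : {set 'I_n} :=
  [set i | [exists p in Kedges n, (a p != 0) && ((p.1 == i) || (p.2 == i))]].

Definition inRk (n k : nat) (y : 'I_n * 'I_n -> R) : Prop :=
  forall (a : 'I_n * 'I_n -> R) (alpha : R),
    valid a alpha -> (#|support a| <= k)%N ->
    \sum_(p in Kedges n) a p * y p <= alpha.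

Definition inProj (n : nat) (E : {set 'I_n * 'I_n})
    (S : ('I_n * 'I_n -> R) -> Prop) (z : 'I_n * 'I_n -> R) : Prop :=
  exists y, S y /\ forall p, p \in E -> z p = y p.

Definition inGk (n k : nat) (E : {set 'I_n * 'I_n}) : Prop :=
  forall z, inProj E (@inCUT n) z <-> inProj E (@inRk n k) z.

End Defs.

(* Let c = kappa(K_k); it is finite and at least 1 because ip <= sdp.  By perturbing the
   weights along a cut of nonnegative value, sdp(K_k, a) <= c ip(K_k, a) holds for every
   weight vector a, not only for those with ip(K_k, a) > 0.

   Let u_1, ..., u_n be unit vectors and a^T y <= alpha a valid inequality for CUT_n
   supported on a set S of at most k nodes.  Relabel S monotonically into [k] and move
   the vectors u_i, i in S, isometrically into R^k (Gram-Schmidt): the value of a on the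
   Gram matrix of u becomes the sdp objective on K_k of the transported weights a', hence
   it is at most c ip(K_k, a') <= c alpha.  So the Gram matrix divided by c lies in
   R_k(K_n); when G is in G_k its projection lies in CUT(G), whence sdp(G, w) <= c ip(G, w).

   K_k is in G_k because CUT_k is the intersection of its valid inequalities: a point
   outside the convex hull of the cut vectors is separated from it by the hyperplane
   through its closest point in that hull. *)

From Pilot Require Import Defs.
From mathcomp Require Import all_boot all_order all_algebra.
From mathcomp Require Import classical_sets boolp reals constructive_ereal ereal.
From mathcomp Require Import topology normedtype derive.
From mathcomp Require Import ring lra.
Import Order.TTheory GRing.Theory Num.Theory numFieldNormedType.Exports.
(* Product topology on [J -> R], to minimise over the simplex of weights. *)
Import ArrowAsProduct.
Local Open Scope ring_scope.
Set Implicit Arguments. Unset Strict Implicit. Unset Printing Implicit Defensive.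

Lemma continuous_sum (R : numFieldType) (T : topologicalType) (J : Type) (s : seq J)
    (P : pred J) (F : J -> T -> R) :
  (forall j, continuous (F j)) -> continuous (fun x => \sum_(j <- s | P j) F j x).
Proof.
move=> Fc; rewrite -functions.fct_sumE.
apply: (big_ind (fun g : T -> R => continuous g)) => // [|f g fc gc x].
  exact: cst_continuous.
exact: continuousD (fc x) (gc x).
Qed.

Lemma quadratic_le0 (R : realFieldType) (s m : R) : 0 <= m ->
  (forall t, 0 < t <= 1 -> 2 * t * s <= t ^+ 2 * m) -> s <= 0.
Proof.
move=> m0 hq; rewrite leNgt; apply/negP => s0.
pose t := s / (s + m).
have sm0 : 0 < s + m by lra.
have ts : t * (s + m) = s by rewrite mulfVK // gt_eqF.
have t0 : 0 < t by rewrite divr_gt0.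
have /hq : 0 < t <= 1 by rewrite t0 ler_pdivrMr // mul1r; lra.
clearbody t; rewrite expr2 -!mulrA mulrCA ler_pM2l // => le2s.
have : 0 < t * s by rewrite mulr_gt0.
move: ts; rewrite mulrDr; lra.
Qed.

Lemma sum_delta (R : pzSemiRingType) (T : finType) (F : T -> R) (j : T) :
  \sum_i (i == j)%:R * F i = F j.
Proof.
by rewrite (bigD1 j) //= eqxx mul1r big1 ?addr0 // => i /negbTE ->; rewrite mul0r.
Qed.

Lemma sum_delta1 (R : pzSemiRingType) (T : finType) (j : T) : \sum_i ((i == j)%:R : R) = 1.
Proof. by rewrite -[RHS](sum_delta (fun=> 1 : R) j); apply: eq_bigr => i _; rewrite mulr1. Qed.

Lemma sum_pushforward (R : pzSemiRingType) (T U : finType) (A : {set T}) (B : {set U})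
    (f : T -> U) (a : T -> R) (F : U -> R) :
  (forall p, p \in A -> a p != 0 -> f p \in B) ->
  \sum_(q in B) (\sum_(p in A | f p == q) a p) * F q = \sum_(p in A) a p * F (f p).
Proof.
move=> fAB; under eq_bigr do rewrite mulr_suml.
rewrite (exchange_big_dep (fun p => p \in A)) => [|q p _ /andP[] //]; apply: eq_bigr => p pA.
have [->|ap] := eqVneq (a p) 0; first by rewrite mul0r big1 // => q _; rewrite mul0r.
rewrite (big_pred1 (f p)) // => q /=; rewrite pA /= eq_sym.
by case: eqP => [->|_]; rewrite ?andbT ?andbF ?fAB.
Qed.

Lemma exists_ord_embedding n k (S : {set 'I_n}) : (0 < k)%N -> (#|S| <= k)%N ->
  exists sig : 'I_n -> 'I_k, {in S &, forall i j, (sig i < sig j)%N = (i < j)%N}.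
Proof.
case: k => // k _ Sk; pose rk (i : 'I_n) := #|[set s in S | (s < i)%N]|.
have rk_mono (i j : 'I_n) : i \in S -> (i < j)%N -> (rk i < rk j)%N.
  move=> iS ij; apply: proper_card; apply/properP; split.
    by apply/fintype.subsetP => s; rewrite !inE => /andP[-> /ltn_trans ->].
  by exists i; rewrite !inE ?iS ?ij ?ltnn.
have rk_lt i : i \in S -> (rk i < k.+1)%N.
  move=> iS; apply: leq_trans Sk; apply: proper_card; apply/properP; split.
    by apply/fintype.subsetP => s; rewrite inE => /andP[].
  by exists i => //; rewrite inE ltnn andbF.
exists (fun i => inord (rk i)) => i j iS jS /=; rewrite !inordK ?rk_lt //.
case: (ltngtP i j) => [/(rk_mono _ _ iS) //|/(rk_mono _ _ jS) ji|/val_inj ->].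
  by rewrite ltnNge ltnW.
by rewrite ltnn.
Qed.

Lemma in_inj_of_ltn_mono n k (S : {set 'I_n}) (sig : 'I_n -> 'I_k) :
  {in S &, forall i j, (sig i < sig j)%N = (i < j)%N} -> {in S &, injective sig}.
Proof.
move=> sig_mono i j iS jS eq_ij; case: (ltngtP i j) => [||/val_inj //].
- by rewrite -(sig_mono _ _ iS jS) eq_ij ltnn.
- by rewrite -(sig_mono _ _ jS iS) eq_ij ltnn.
Qed.

Section Gram.
Variable R : realType.
Implicit Types N m : nat.

Definition dot N (a b : 'I_N -> R) : R := \sum_(l < N) a l * b l.

Lemma dotC N (a b : 'I_N -> R) : dot a b = dot b a.
Proof. by apply: eq_bigr => l _; rewrite mulrC. Qed.

Lemma dot_sqr N (a : 'I_N -> R) : dot a a = \sum_(l < N) a l ^+ 2.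
Proof. by apply: eq_bigr => l _; rewrite expr2. Qed.

Lemma dot_ge0 N (a : 'I_N -> R) : 0 <= dot a a.
Proof. by rewrite dot_sqr sumr_ge0 // => l _; rewrite sqr_ge0. Qed.

Lemma dot_eq0 N (a : 'I_N -> R) : dot a a = 0 -> forall l, a l = 0.
Proof.
move=> /eqP; rewrite psumr_eq0 => [/allP a0 l|l _]; last by rewrite -expr2 sqr_ge0.
by have /= := a0 l (mem_index_enum _); rewrite mulf_eq0 orbb => /eqP.
Qed.

Lemma normr_dot_le N (a b : 'I_N -> R) : `|dot a b| <= (dot a a + dot b b) / 2.
Proof.
apply: le_trans (ler_norm_sum _ _ _) _.
rewrite ler_pdivlMr // -big_split mulr_suml /=; apply: ler_sum => l _.
have sq (x : R) : x * x = `|x| * `|x| by rewrite -normrM ger0_norm // -expr2 sqr_ge0.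
rewrite normrM sq [b l * _]sq; have := sqr_ge0 (`|a l| - `|b l|); lra.
Qed.

Lemma normr_dot_unit_le1 N (a b : 'I_N -> R) :
  dot a a = 1 -> dot b b = 1 -> `|dot a b| <= 1.
Proof. by move=> a1 b1; have := normr_dot_le a b; rewrite a1 b1; lra. Qed.

Lemma dot_sumr N m (f : 'I_m -> R) (B : 'I_m -> 'I_N -> R) (y : 'I_N -> R) :
  dot (fun l => \sum_(a < m) f a * B a l) y = \sum_(a < m) f a * dot (B a) y.
Proof.
rewrite /dot; under eq_bigr do rewrite mulr_suml.
rewrite exchange_big /=; apply: eq_bigr => a _; rewrite mulr_sumr.
by apply: eq_bigr => l _; ring.
Qed.

Lemma dotBl N (a b c : 'I_N -> R) : dot (fun l => a l - b l) c = dot a c - dot b c.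
Proof. by rewrite /dot -sumrB; apply: eq_bigr => l _; rewrite mulrBl. Qed.

Lemma dotZl N (k : R) (a b : 'I_N -> R) : dot (fun l => k * a l) b = k * dot a b.
Proof. by rewrite /dot mulr_sumr; apply: eq_bigr => l _; rewrite mulrA. Qed.

Definition orthonormal N m (B : 'I_m -> 'I_N -> R) :=
  forall a b, dot (B a) (B b) = (a == b)%:R.

Definition in_span N m (B : 'I_m -> 'I_N -> R) (v : 'I_N -> R) :=
  v = (fun l => \sum_(a < m) dot v (B a) * B a l).

Lemma dot_proj_orthonormal N m (B : 'I_m -> 'I_N -> R) (f : 'I_m -> R) b :
  orthonormal B -> dot (fun l => \sum_(a < m) f a * B a l) (B b) = f b.
Proof. by move=> onB; rewrite dot_sumr; under eq_bigr do rewrite onB mulrC; exact: sum_delta. Qed.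

Lemma dot_span_orth N m (B : 'I_m -> 'I_N -> R) x e :
  in_span B x -> (forall a, dot e (B a) = 0) -> dot x e = 0.
Proof.
move=> -> eB; rewrite dot_sumr big1 // => a _; by rewrite (dotC (B a)) eB mulr0.
Qed.

Definition ocons N m (e : 'I_N -> R) (B : 'I_m -> 'I_N -> R) (a : 'I_m.+1) :=
  if unlift ord0 a is Some a' then B a' else e.

Lemma ocons0 N m (e : 'I_N -> R) (B : 'I_m -> 'I_N -> R) : ocons e B ord0 = e.
Proof. by rewrite /ocons unlift_none. Qed.

Lemma oconsS N m (e : 'I_N -> R) (B : 'I_m -> 'I_N -> R) a : ocons e B (lift ord0 a) = B a.
Proof. by rewrite /ocons liftK. Qed.

Lemma orthonormal_ocons N m (e : 'I_N -> R) (B : 'I_m -> 'I_N -> R) :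
  orthonormal B -> dot e e = 1 -> (forall a, dot e (B a) = 0) -> orthonormal (ocons e B).
Proof.
move=> onB e1 eB a b.
case: (unliftP ord0 a) => [a'|] ->; case: (unliftP ord0 b) => [b'|] ->;
  rewrite ?ocons0 ?oconsS ?e1 ?eqxx //.
  by rewrite dotC eB eq_sym (negbTE (neq_lift _ _)).
Qed.

Lemma in_span_ocons N m (e : 'I_N -> R) (B : 'I_m -> 'I_N -> R) x :
  (forall l, x l = dot x e * e l + \sum_(a < m) dot x (B a) * B a l) ->
  in_span (ocons e B) x.
Proof.
move=> hx; apply: funext => l; rewrite big_ord_recl ocons0 hx; congr (_ + _).
by apply: eq_bigr => a _; rewrite oconsS.
Qed.

Lemma orthonormal_extend N m (B : 'I_m -> 'I_N -> R) (v : 'I_N -> R) :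
  orthonormal B -> exists m' (B' : 'I_m' -> 'I_N -> R),
    [/\ (m' <= m.+1)%N, orthonormal B', in_span B' v &
        forall x, in_span B x -> in_span B' x].
Proof.
move=> onB.
pose p l := \sum_(a < m) dot v (B a) * B a l.
pose r l := v l - p l.
have rB b : dot r (B b) = 0 by rewrite dotBl dot_proj_orthonormal // subrr.
have [r0|rn0] := eqVneq (dot r r) 0.
  exists m, B; split => //; apply: funext => l.
  by have /eqP := dot_eq0 r0 l; rewrite subr_eq0 => /eqP.
pose nr := Num.sqrt (dot r r).
have nr0 : 0 < nr by rewrite sqrtr_gt0 lt_def rn0 dot_ge0.
have nr2 : nr * nr = dot r r by rewrite -expr2 sqr_sqrtr // dot_ge0.
pose e l := nr^-1 * r l.
have eB a : dot e (B a) = 0 by rewrite dotZl rB mulr0.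
have e1 : dot e e = 1.
  by rewrite dotZl dotC dotZl mulrA -invfM nr2 mulVf.
have ve : dot v e = nr.
  have pe : dot p e = 0 by rewrite dot_sumr big1 // => a _; rewrite (dotC (B a)) eB mulr0.
  have re : dot r e = nr by rewrite dotC dotZl -nr2 mulKf // gt_eqF.
  by have : dot r e = dot v e - dot p e := dotBl v p e; rewrite re pe subr0.
exists m.+1, (ocons e B); split => //; first exact: orthonormal_ocons.
  by apply: in_span_ocons => l; rewrite ve mulVKf ?gt_eqF // subrK.
move=> x hx; apply: in_span_ocons => l.
by rewrite (dot_span_orth hx eB) mul0r add0r {1}hx.
Qed.

Lemma orthonormal_span N n (u : 'I_n -> 'I_N -> R) (s : seq 'I_n) :
  exists m (B : 'I_m -> 'I_N -> R),
    [/\ (m <= size s)%N, orthonormal B & forall i, i \in s -> in_span B (u i)].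
Proof.
elim: s => [|i s [m [B [ms onB spanB]]]].
  by exists 0%N, (fun _ _ => 0); split => // -[].
have [m' [B' [mm' onB' iB' BB']]] := orthonormal_extend (u i) onB.
exists m', B'; split => //; first exact: leq_trans mm' _.
by move=> j; rewrite in_cons => /predU1P[->|/spanB/BB'].
Qed.

Lemma gram_embedding N K n (S : {set 'I_n}) (u : 'I_n -> 'I_N -> R) :
  (#|S| <= K)%N -> exists w : 'I_n -> 'I_K -> R,
    {in S &, forall i j, dot (w i) (w j) = dot (u i) (u j)}.
Proof.
move=> SK; have [m [B [ms onB spanB]]] := orthonormal_span u (enum S).
have mK : (m <= K)%N by rewrite (leq_trans ms) // -cardE.
pose f i (l : nat) : R := oapp (fun a : 'I_m => dot (u i) (B a)) 0 (insub l).
exists (fun i (l : 'I_K) => f i l); move=> i j iS jS.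
have -> : dot (u i) (u j) = \sum_(a < m) f i a * f j a.
  have ui : in_span B (u i) by apply: spanB; rewrite mem_enum.
  rewrite {1}ui dot_sumr; apply: eq_bigr => a _.
  by rewrite /f valK /= (dotC (B a) (u j)).
rewrite (big_ord_widen _ (fun a => f i a * f j a) mK) big_mkcond /=.
by apply: eq_bigr => l _; case: ifP => // /negbT lm; rewrite /f insubF ?mul0r // (negbTE lm).
Qed.

End Gram.

Section ConvexHull.
Variables (R : realType) (I J : finType) (A : {set I}) (c : J -> I -> R).
Local Open Scope classical_set_scope.

Definition in_conv (y : I -> R) := exists lam : J -> R,
  (forall j, 0 <= lam j) /\ \sum_j lam j = 1 /\
  forall p, p \in A -> y p = \sum_j lam j * c j p.

Lemma in_conv_point j : in_conv (c j).
Proof.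
exists (fun i => (i == j)%:R); split => [i|]; first by rewrite ler0n.
by split=> [|p _]; rewrite ?sum_delta1 ?sum_delta.
Qed.

Lemma in_conv_sum_le (B : {set I}) (d : I -> R) alpha y : {subset B <= A} ->
  (forall j, \sum_(p in B) d p * c j p <= alpha) -> in_conv y ->
  \sum_(p in B) d p * y p <= alpha.
Proof.
move=> BA hd [lam [lam0 [lam1 ylam]]].
have -> : \sum_(p in B) d p * y p = \sum_j lam j * \sum_(p in B) d p * c j p.
  under [RHS]eq_bigr do rewrite mulr_sumr.
  rewrite exchange_big; apply: eq_bigr => p pB /=.
  rewrite ylam ?BA // mulr_sumr.
  by apply: eq_bigr => j _; rewrite mulrCA.
rewrite -[alpha]mul1r -lam1 mulr_suml; apply: ler_sum => j _.
exact: ler_wpM2l.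
Qed.

Definition comb (lam : J -> R) p := \sum_j lam j * c j p.

Definition simplex := [set lam : J -> R | forall j, `[0, 1]%classic (lam j)] `&`
  [set lam | \sum_j lam j = 1].

Definition dist2 (y : I -> R) lam := \sum_(p in A) (y p - comb lam p) ^+ 2.

Lemma compact_simplex : compact simplex.
Proof.
apply: compact_closedI; first exact: tychonoff (fun j => @segment_compact R 0 1).
apply: (@preimage_closed _ _ (fun lam : J -> R => \sum_j lam j) [set 1]) => [lam _|].
  by apply: continuous_sum => j; exact: proj_continuous.
exact: closed_eq.
Qed.

Lemma continuous_dist2 y : continuous (dist2 y).
Proof.
apply: continuous_sum => p lam.
have comb_c : continuous (comb ^~ p).
  apply: continuous_sum => j mu.
  by apply: continuousM; [exact: proj_continuous | exact: cst_continuous].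
have d_c : continuous (fun mu => y p - comb mu p).
  by move=> mu; apply: continuousB; [exact: cst_continuous | exact: comb_c].
exact: continuousM (d_c lam) (d_c lam).
Qed.

Lemma simplexP lam : simplex lam <-> (forall j, 0 <= lam j <= 1) /\ \sum_j lam j = 1.
Proof. by split=> -[l01 l1]; split=> // j; have := l01 j; rewrite /= in_itv. Qed.

Lemma simplex_delta j : simplex (fun i => (i == j)%:R).
Proof.
apply/simplexP; split=> [i|]; last exact: sum_delta1.
by case: (i == j); rewrite ?lexx ?ler01.
Qed.

Definition toward (lam : J -> R) j t i := (1 - t) * lam i + t * (i == j)%:R.

Lemma simplex_toward lam j t : simplex lam -> 0 <= t <= 1 -> simplex (toward lam j t).
Proof.
move=> /simplexP[l01 l1] /andP[t0 t1]; apply/simplexP; split=> [i|].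
  have /andP[li0 li1] := l01 i; rewrite /toward.
  by case: (i == j); rewrite ?mulr0 ?mulr1; apply/andP; split; nra.
by rewrite big_split /= -!mulr_sumr l1 sum_delta1 !mulr1 subrK.
Qed.

Lemma comb_toward lam j t p : comb (toward lam j t) p = (1 - t) * comb lam p + t * c j p.
Proof.
rewrite /comb; under eq_bigr do rewrite mulrDl.
rewrite big_split /= -(sum_delta (c ^~ p) j) !mulr_sumr.
by congr (_ + _); apply: eq_bigr => i _; rewrite mulrA.
Qed.

Lemma exists_closest y (j0 : J) :
  exists2 lam, simplex lam & forall mu, simplex mu -> dist2 y lam <= dist2 y mu.
Proof.
have [lam /set_mem slam hmin] := compact_EVT_min (ex_intro _ _ (simplex_delta j0))
  compact_simplex (continuous_subspaceT (@continuous_dist2 y)).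
by exists lam => // mu smu; apply: hmin; exact: mem_set.
Qed.

(* First-order optimality of the closest point, tested along the segments to the vertices. *)
Lemma closest_optimal y lam : simplex lam ->
  (forall mu, simplex mu -> dist2 y lam <= dist2 y mu) ->
  forall j, \sum_(p in A) (y p - comb lam p) * (c j p - comb lam p) <= 0.
Proof.
move=> slam hmin j.
apply: (@quadratic_le0 _ _ (\sum_(p in A) (c j p - comb lam p) ^+ 2)) => [|t t01].
  by apply: sumr_ge0 => p _; exact: sqr_ge0.
have /andP[t0 t1] := t01.
have /hmin : simplex (toward lam j t) by apply: simplex_toward; rewrite // ltW.
have -> : dist2 y (toward lam j t) = dist2 y lam
    - 2 * t * \sum_(p in A) (y p - comb lam p) * (c j p - comb lam p)
    + t ^+ 2 * \sum_(p in A) (c j p - comb lam p) ^+ 2.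
  rewrite /dist2 !mulr_sumr -sumrB -big_split /=; apply: eq_bigr => p _.
  by rewrite comb_toward; ring.
lra.
Qed.

Lemma separation y : ~ in_conv y -> exists (d : I -> R) alpha,
  (forall j, \sum_(p in A) d p * c j p <= alpha) /\ alpha < \sum_(p in A) d p * y p.
Proof.
move=> ny; have [j0 _|J0] := pickP J; last first.
  exists (fun=> 0), (-1); split=> [j|]; first by have := J0 j.
  by rewrite big1 ?ltrN10 // => p _; rewrite mul0r.
have [lam slam hmin] := exists_closest y j0.
pose d p := y p - comb lam p.
exists d, (\sum_(p in A) d p * comb lam p); split.
  move=> j; rewrite -subr_le0 -sumrB.
  by under eq_bigr do rewrite -mulrBr; exact: closest_optimal.
rewrite -subr_gt0 -sumrB.
under eq_bigr do rewrite -mulrBr.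
rewrite lt_def sumr_ge0 ?andbT => [|p _]; last by rewrite -expr2 sqr_ge0.
apply/eqP => /eqP; rewrite psumr_eq0 => [/allP d0|p _]; last by rewrite -expr2 sqr_ge0.
apply: ny; have /simplexP[l01 _] := slam.
exists lam; split=> [j|]; first by have /andP[] := l01 j.
split=> [|p pA]; first by case/simplexP: slam.
by have /= := d0 p (mem_index_enum _); rewrite pA mulf_eq0 orbb subr_eq0 => /eqP.
Qed.
End ConvexHull.

Section CutPolytope.
Variable R : realType.

Definition ip_obj n (E : {set 'I_n * 'I_n}) (w : 'I_n * 'I_n -> R) (x : 'I_n -> bool) :=
  \sum_(p in E) w p * cutvec R x p.

Definition unit_family n (u : 'I_n -> 'I_n -> R) := forall i, \sum_(l < n) u i l ^+ 2 = 1.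

Definition sdp_obj n (E : {set 'I_n * 'I_n}) (w : 'I_n * 'I_n -> R) (u : 'I_n -> 'I_n -> R) :=
  \sum_(p in E) w p * dot (u p.1) (u p.2).

Lemma sgnN b : sgn R (~~ b) = - sgn R b.
Proof. by case: b; rewrite /sgn ?opprK. Qed.

Lemma normr_sgn b : `|sgn R b| = 1.
Proof. by case: b; rewrite /sgn ?normrN normr1. Qed.

Lemma sgn_sqr b : sgn R b ^+ 2 = 1.
Proof. by case: b; rewrite /sgn ?sqrrN expr1n. Qed.

Lemma normr_cutvec n (x : 'I_n -> bool) p : `|cutvec R x p| = 1.
Proof. by rewrite /cutvec normrM !normr_sgn mulr1. Qed.

Lemma cutvec_sqr n (x : 'I_n -> bool) p : cutvec R x p ^+ 2 = 1.
Proof. by rewrite /cutvec exprMn !sgn_sqr mulr1. Qed.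

Lemma unit_dot n (u : 'I_n -> 'I_n -> R) i j :
  unit_family u -> `|dot (u i) (u j)| <= 1.
Proof. by move=> uu; apply: normr_dot_unit_le1; rewrite dot_sqr uu. Qed.

Lemma sum_sqr_delta n (j : 'I_n) : \sum_(l < n) ((l == j)%:R : R) ^+ 2 = 1.
Proof.
rewrite -[RHS](sum_delta1 _ j); apply: eq_bigr => l _.
by case: (l == j); rewrite ?expr1n ?expr0n.
Qed.

Lemma unit_family_transport n k (S : {set 'I_n}) (sig : 'I_n -> 'I_k)
    (u : 'I_n -> 'I_n -> R) :
  (0 < k)%N -> (#|S| <= k)%N -> {in S &, injective sig} -> unit_family u ->
  exists2 v : 'I_k -> 'I_k -> R, unit_family v &
    {in S &, forall i j, dot (v (sig i)) (v (sig j)) = dot (u i) (u j)}.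
Proof.
move=> k0 Sk sig_inj uu; have [w hw] := gram_embedding u Sk.
pose v q := if [pick i in S | sig i == q] is Some i then w i
            else fun l => (l == Ordinal k0)%:R.
have v_sig i : i \in S -> v (sig i) = w i.
  move=> iS; rewrite /v; case: pickP => [j /andP[jS /eqP/sig_inj ->] //|/(_ i)].
  by rewrite iS eqxx.
exists v; last by move=> i j iS jS; rewrite !v_sig // hw.
move=> q; rewrite /v; case: pickP => [i /andP[iS _]|_]; last exact: sum_sqr_delta.
by rewrite -dot_sqr hw // dot_sqr uu.
Qed.

Lemma sum_mul_le_sum_norm (T : finType) (B : {set T}) (w z : T -> R) :
  (forall p, `|z p| <= 1) -> \sum_(p in B) w p * z p <= \sum_(p in B) `|w p|.
Proof.
move=> z1; apply: ler_sum => p _; apply: le_trans (ler_norm _) _.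
by rewrite normrM ler_piMr.
Qed.

Lemma ip_has_sup n (E : {set 'I_n * 'I_n}) (w : 'I_n * 'I_n -> R) :
  has_sup [set r | exists x : 'I_n -> bool, r = ip_obj E w x].
Proof.
split; first by exists (ip_obj E w (fun=> true)), (fun=> true).
exists (\sum_(p in E) `|w p|) => _ [x ->].
by apply: sum_mul_le_sum_norm => p; rewrite normr_cutvec.
Qed.

Lemma sdp_has_sup n (E : {set 'I_n * 'I_n}) (w : 'I_n * 'I_n -> R) :
  has_sup [set r | exists u, unit_family u /\ r = sdp_obj E w u].
Proof.
split.
  exists (sdp_obj E w (fun i l => (l == i)%:R)), (fun i l => (l == i)%:R).
  by split=> // i; exact: sum_sqr_delta.
exists (\sum_(p in E) `|w p|) => _ [u [uu ->]].
by apply: sum_mul_le_sum_norm => p; exact: unit_dot.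
Qed.

Lemma ip_obj_le_ip n (E : {set 'I_n * 'I_n}) (w : 'I_n * 'I_n -> R) x :
  ip_obj E w x <= ip E w.
Proof. by apply: sup_upper_bound; [exact: ip_has_sup | exists x]. Qed.

Lemma ip_le n (E : {set 'I_n * 'I_n}) (w : 'I_n * 'I_n -> R) t :
  (forall x, ip_obj E w x <= t) -> ip E w <= t.
Proof. by move=> hx; apply: ge_sup => [|_ [x ->]]; [case: (ip_has_sup E w) | exact: hx]. Qed.

Lemma sdp_obj_le_sdp n (E : {set 'I_n * 'I_n}) (w : 'I_n * 'I_n -> R) u :
  unit_family u -> sdp_obj E w u <= sdp E w.
Proof. by move=> uu; apply: sup_upper_bound; [exact: sdp_has_sup | exists u]. Qed.

Lemma sdp_le n (E : {set 'I_n * 'I_n}) (w : 'I_n * 'I_n -> R) t :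
  (forall u, unit_family u -> sdp_obj E w u <= t) -> sdp E w <= t.
Proof. by move=> hu; apply: ge_sup => [|_ [u [/hu le ->]]]; first case: (sdp_has_sup E w). Qed.

Lemma unit_family_sgn_delta n (s : 'I_n -> bool) (f : 'I_n -> 'I_n) :
  unit_family (fun i l => sgn R (s i) * (l == f i)%:R).
Proof.
by move=> i; under eq_bigr do rewrite exprMn sgn_sqr mul1r; exact: sum_sqr_delta.
Qed.

Lemma ip_le_sdp n (E : {set 'I_n * 'I_n}) (w : 'I_n * 'I_n -> R) : ip E w <= sdp E w.
Proof.
apply: ip_le; case: n E w => [|n] E w x.
  have u0 : unit_family (fun _ _ : 'I_0 => 0 : R) by case.
  by apply: le_trans (sdp_obj_le_sdp E w u0); rewrite /ip_obj /sdp_obj !big1 // => -[[]].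
suff -> : ip_obj E w x = sdp_obj E w (fun i l => sgn R (x i) * (l == ord0)%:R).
  exact/sdp_obj_le_sdp/unit_family_sgn_delta.
apply: eq_bigr => p _; congr (_ * _).
rewrite /dot (bigD1 ord0) //= big1 ?addr0 => [|l /negbTE ->]; last by rewrite !mulr0.
by rewrite !mulr1.
Qed.

Lemma ip_addr_le n (E : {set 'I_n * 'I_n}) (a b : 'I_n * 'I_n -> R) :
  ip E (fun p => a p + b p) <= ip E a + \sum_(p in E) `|b p|.
Proof.
apply: ip_le => x; rewrite /ip_obj; under eq_bigr do rewrite mulrDl.
rewrite big_split /=; apply: lerD; first exact: ip_obj_le_ip.
by apply: sum_mul_le_sum_norm => p; rewrite normr_cutvec.
Qed.

Lemma sdp_addr_le n (E : {set 'I_n * 'I_n}) (a b : 'I_n * 'I_n -> R) :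
  sdp E (fun p => a p + b p) <= sdp E a + \sum_(p in E) `|b p|.
Proof.
apply: sdp_le => u uu; rewrite /sdp_obj; under eq_bigr do rewrite mulrDl.
rewrite big_split /=; apply: lerD; first exact: sdp_obj_le_sdp.
by apply: sum_mul_le_sum_norm => p; exact: unit_dot.
Qed.

(* Flipping the sign of coordinate [i] is a fixed-point-free involution of the cuts. *)
Lemma sum_sgn_mul_eq0 n (i j : 'I_n) : i != j ->
  \sum_(x : {ffun 'I_n -> bool}) sgn R (x i) * sgn R (x j) = 0.
Proof.
move=> ij; pose flip (x : {ffun 'I_n -> bool}) := [ffun l => (l == i) (+) x l].
have flipK : involutive flip by move=> x; apply/ffunP => l; rewrite !ffunE addbA addbb.
set S := \sum_x _; suff : S = - S by lra.
rewrite {1}/S (reindex_inj (inv_inj flipK)) -sumrN; apply: eq_bigr => x _.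
by rewrite !ffunE eqxx eq_sym (negbTE ij) sgnN mulNr.
Qed.

Lemma Kedges_neq n (p : 'I_n * 'I_n) : p \in Kedges n -> p.1 != p.2.
Proof. by rewrite inE neq_ltn => ->. Qed.

Lemma exists_ip_obj_ge0 n (a : 'I_n * 'I_n -> R) :
  exists x : 'I_n -> bool, 0 <= ip_obj (Kedges n) a x.
Proof.
have avg0 : \sum_(x : {ffun 'I_n -> bool}) ip_obj (Kedges n) a x = 0.
  rewrite exchange_big big1 //= => p /Kedges_neq pK.
  by rewrite -mulr_sumr sum_sgn_mul_eq0 ?mulr0.
apply: contrapT => /forallNP neg.
pose x0 : {ffun 'I_n -> bool} := [ffun=> false].
suff : \sum_(x : {ffun 'I_n -> bool}) ip_obj (Kedges n) a x < 0 by rewrite avg0 ltxx.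
have lt0 x : ip_obj (Kedges n) a x < 0 by rewrite ltNge; apply/negP; exact: neg.
rewrite (bigD1 x0) //=; have := lt0 x0.
have : \sum_(x | x != x0) ip_obj (Kedges n) a x <= 0 by apply: sumr_le0 => x _; exact: ltW.
lra.
Qed.

Lemma valid_ip_obj_le n (a : 'I_n * 'I_n -> R) alpha x :
  valid a alpha -> ip_obj (Kedges n) a x <= alpha.
Proof.
move=> va; have := va _ (in_conv_point (Kedges n) (fun x : {ffun 'I_n -> bool} => cutvec R x)
  [ffun i => x i]).
by rewrite /ip_obj; under eq_bigr do rewrite /cutvec !ffunE.
Qed.

Lemma valid_of_ip_obj_le n (a : 'I_n * 'I_n -> R) alpha :
  (forall x : {ffun 'I_n -> bool}, ip_obj (Kedges n) a x <= alpha) -> valid a alpha.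
Proof. by move=> ha y; apply: in_conv_sum_le => [p|j]; [exact: id | exact: ha]. Qed.

Lemma card_Kedges_gt0 k : (2 <= k)%N -> (0 < #|Kedges k|)%N.
Proof.
move=> k2; apply/card_gt0P.
by exists (Ordinal (ltnW k2), Ordinal k2); rewrite inE.
Qed.

End CutPolytope.

Section RatioBound.
Variables (R : realType) (k : nat) (c : R).
Hypotheses (k2 : (2 <= k)%N) (c0 : 0 < c).
Hypothesis ratio_Kk :
  forall a, 0 < ip (Kedges k) a -> sdp (Kedges k) a <= c * ip (Kedges k) a.

(* Adding [e] times a cut of nonnegative value makes [ip] positive
   and moves [ip] and [sdp] by at most [e #|E_k|]. *)
Lemma sdp_le_ip_Kedges a : sdp (Kedges k) a <= c * ip (Kedges k) a.
Proof.
have [x0 x0_ge0] := exists_ip_obj_ge0 a.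
pose m : R := #|Kedges k|%:R.
have m0 : 0 < m by rewrite ltr0n card_Kedges_gt0.
have perturb e : 0 < e -> sdp (Kedges k) a <= c * ip (Kedges k) a + (c + 1) * (e * m).
  move=> e0; pose b p := e * cutvec R x0 p.
  have em0 : 0 < e * m by rewrite mulr_gt0.
  have sum_b : \sum_(p in Kedges k) `|b p| = e * m.
    rewrite (eq_bigr (fun=> e)) ?sumr_const ?mulr_natr // => p _.
    by rewrite normrM normr_cutvec mulr1 gtr0_norm.
  have ip_ab : 0 < ip (Kedges k) (fun p => a p + b p).
    apply: lt_le_trans (ip_obj_le_ip _ _ x0).
    rewrite /ip_obj (eq_bigr (fun p => a p * cutvec R x0 p + e)) => [|p _]; last first.
      by rewrite mulrDl -mulrA -expr2 cutvec_sqr mulr1.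
    by rewrite big_split /= sumr_const -mulr_natr -/m; move: x0_ge0; rewrite /ip_obj; lra.
  have sdp_a : sdp (Kedges k) a <= sdp (Kedges k) (fun p => a p + b p) + e * m.
    have := sdp_addr_le (Kedges k) (fun p => a p + b p) (fun p => - b p).
    under [X in sdp _ X]eq_fun do rewrite addrK.
    by under eq_bigr do rewrite normrN; rewrite sum_b.
  have := ip_addr_le (Kedges k) a b; rewrite sum_b => ip_b.
  have := ratio_Kk ip_ab; have := ler_wpM2l (ltW c0) ip_b; lra.
apply/ler_addgt0Pr => e e0; pose d := (c + 1) * m.
have d0 : 0 < d by rewrite mulr_gt0 // ltr_wpDl // ltW.
have := perturb (e / d) (divr_gt0 e0 d0).
by rewrite mulrCA -/d divfK ?gt_eqF.
Qed.

Lemma valid_sdp_obj_le n (a : 'I_n * 'I_n -> R) alpha (u : 'I_n -> 'I_n -> R) :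
  valid a alpha -> (#|Defs.support a| <= k)%N -> unit_family u ->
  sdp_obj (Kedges n) a u <= c * alpha.
Proof.
move=> va Sk uu; set S := Defs.support a in Sk.
have inS p : p \in Kedges n -> a p != 0 -> (p.1 \in S) && (p.2 \in S).
  move=> pK ap; rewrite !inE; apply/andP; split; apply/existsP; exists p;
  by rewrite pK ap eqxx ?orbT.
have k0 : (0 < k)%N by apply: leq_trans k2.
have [sig sig_mono] := exists_ord_embedding k0 Sk.
have [v vv hv] := unit_family_transport k0 Sk (in_inj_of_ltn_mono sig_mono) uu.
pose b q := \sum_(p in Kedges n | (sig p.1, sig p.2) == q) a p.
have push F : \sum_(q in Kedges k) b q * F q = \sum_(p in Kedges n) a p * F (sig p.1, sig p.2).
  apply: sum_pushforward => p pK ap; have /andP[i1 i2] := inS p pK ap.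
  by move: pK; rewrite !inE /= sig_mono.
have -> : sdp_obj (Kedges n) a u = sdp_obj (Kedges k) b v.
  rewrite /sdp_obj push; apply: eq_bigr => p pK.
  have [->|ap] := eqVneq (a p) 0; first by rewrite !mul0r.
  by have /andP[i1 i2] := inS p pK ap; rewrite hv.
apply: le_trans (sdp_obj_le_sdp _ _ vv) _; apply: le_trans (sdp_le_ip_Kedges b) _.
rewrite ler_pM2l //; apply: ip_le => x.
by rewrite /ip_obj push; exact: (valid_ip_obj_le (fun i => x (sig i)) va).
Qed.

(* The Gram matrix divided by [c] lies in [R_k], hence in [CUT] on the edges of [G]. *)
Lemma sdp_le_ip_Gk n (E : {set 'I_n * 'I_n}) (w : 'I_n * 'I_n -> R) :
  E \subset Kedges n -> inGk R k E -> sdp E w <= c * ip E w.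
Proof.
move=> EK Gk; apply: sdp_le => u uu.
pose y p := c^-1 * dot (u p.1) (u p.2).
have yR : inRk k y.
  move=> a alpha va Sa.
  have -> : \sum_(p in Kedges n) a p * y p = c^-1 * sdp_obj (Kedges n) a u.
    by rewrite mulr_sumr; apply: eq_bigr => p _; rewrite mulrCA.
  by rewrite ler_pdivrMl //; exact: valid_sdp_obj_le.
have [y' [CUTy' yy']] := (Gk y).2 (ex_intro _ y (conj yR (fun _ _ => erefl))).
rewrite /sdp_obj (eq_bigr (fun p => c * (w p * y' p))) => [|p pE]; last first.
  by rewrite -yy' // /y mulrCA mulVKf ?gt_eqF.
rewrite -mulr_sumr ler_pM2l //.
by apply: (in_conv_sum_le (fintype.subsetP EK)) CUTy' => x; exact: ip_obj_le_ip.
Qed.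

End RatioBound.

Section Kappa.
Variable R : realType.

Lemma kappa_Kedges_ge1 k : (2 <= k)%N -> (1%:E <= kappa R (Kedges k))%E.
Proof.
move=> k2; pose a1 : 'I_k * 'I_k -> R := fun=> 1.
have ip1 : 0 < ip (Kedges k) a1.
  apply: lt_le_trans (ip_obj_le_ip _ _ (fun=> true)).
  rewrite /ip_obj (eq_bigr (fun=> 1)) => [|p _]; last by rewrite /cutvec /sgn !mul1r.
  by rewrite sumr_const ltr0n card_Kedges_gt0.
apply: le_trans (ereal_sup_ubound _); last by exists a1.
by rewrite lee_fin ler_pdivlMr // mul1r ip_le_sdp.
Qed.

Lemma kappa_le_kappa_Kedges k n (E : {set 'I_n * 'I_n}) : (2 <= k)%N ->
  E \subset Kedges n -> inGk R k E -> (kappa R E <= kappa R (Kedges k))%E.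
Proof.
move=> k2 EK Gk; have := kappa_Kedges_ge1 k2.
case Kk : (kappa R (Kedges k)) => [r| |] // r1; last by rewrite leey.
rewrite lee_fin in r1; have r0 : 0 < r by apply: lt_le_trans r1.
have ratio a : 0 < ip (Kedges k) a -> sdp (Kedges k) a <= r * ip (Kedges k) a.
  move=> ip0; have : ((sdp (Kedges k) a / ip (Kedges k) a)%:E <= kappa R (Kedges k))%E.
    by apply: ereal_sup_ubound; exists a.
  by rewrite Kk lee_fin ler_pdivrMr // mulrC.
apply: ge_ereal_sup => _ [w w0 <-].
by rewrite lee_fin ler_pdivrMr // (sdp_le_ip_Gk k2 r0 ratio).
Qed.

Lemma inCUT_of_inRk n (y : 'I_n * 'I_n -> R) : inRk n y -> inCUT y.
Proof.
move=> yR; apply: contrapT.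
move=> /(@separation R _ _ (Kedges n) (fun x : {ffun 'I_n -> bool} => cutvec R x) y).
move=> [d [alpha [dc lt_alpha]]].
have := yR d alpha (valid_of_ip_obj_le dc).
by rewrite (leq_trans (max_card _)) ?card_ord // leNgt lt_alpha => /(_ isT).
Qed.

Lemma Kedges_in_Gk k : inGk R k (Kedges k).
Proof.
move=> z; split=> -[y [yS zy]]; exists y; split=> //.
  by move=> a alpha va _; exact: va.
exact: inCUT_of_inRk.
Qed.

End Kappa.

Theorem mainTheorem9 (R : realType) (k : nat) :
  (2 <= k)%N ->
  (forall (n : nat) (E : {set 'I_n * 'I_n}),
      E \subset Kedges n -> inGk R k E ->
      (kappa R E <= kappa R (Kedges k))%E)
  /\ inGk R k (Kedges k).
Proof.
move=> k2; split; last exact: Kedges_in_Gk.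
by move=> n E; exact: kappa_le_kappa_Kedges.
Qed.
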